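(* Assume the distribution $\mathcal D_2(\lambda)$ defined in the context. For any $\Pi\subseteq\mathbf X_1$ and any $Y\in\mathbf X_1$, \[|H(X_b\mid\Pi)-H(X_a\mid\Pi)|\le\lambda,\qquad |H(Y\mid\Pi,X_b)-H(Y\mid\Pi,X_a)|\le3\lambda.\]
   Context: Entropies use the natural logarithm; $k$ is a fixed positive integer. Scores: for a DAG (identified with its set of families $\langle Y,\Pi\rangle$, $|\Pi|\le k$) the score is $-\sum H(Y\mid\Pi)$ over its families; Markov-equivalent DAGs form equivalence classes (ECs) with a common score. Construction. $\mathcal D_1$ is a distribution over a finite set $\mathbf X_1$ of at least $k$ discrete variables, containing a variable $X_a$, such that for some $\alpha,\beta>0$: (I) among DAGs over $\mathbf X_1$ with in-degree $\le k$ there is a unique optimal EC, with score gap at least $\beta$ to the next-best EC; (II) $X_a$ has no children in any structure of the optimal EC; (III) $H(X_a\mid\mathbf X_1\setminus\{X_a\})=\alpha$. Let $\mathbf X=\mathbf X_1\cup\{X_b\}$, $d=|\mathbf X|$. For $\lambda\in(0,\min(\alpha,\beta/(3d)))$, $\mathcal D_2(\lambda)$ is a distribution on $\mathbf X$ with marginal $\mathcal D_1$ on $\mathbf X_1$ such that: (IV) there is a hidden Bernoulli variable $C$ independent of $\mathbf X_1$ with $P[X_b=X_a\mid C=1]=1$ and $X_b$ independent of $\mathbf X_1$ given $C=0$; (V) $\max(H(X_b\mid X_a),H(X_a\mid X_b))=\lambda$. *)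

From HB Require Import structures.
From mathcomp Require Import all_boot all_order all_algebra.
From mathcomp Require Import all_classical all_reals all_analysis.
Set Implicit Arguments. Unset Strict Implicit. Unset Printing Implicit Defensive.
Import Order.TTheory GRing.Theory Num.Theory.
Local Open Scope ring_scope.

Section Info.
Variables (R : realType) (Omega : finType) (p : Omega -> R).

Definition prob (E : pred Omega) : R := \sum_(w | E w) p w.

(* Shannon entropy (natural log) of a discrete random variable Z : Omega -> U,
   H(Z) = - sum_z P[Z=z] ln P[Z=z] = - sum_w p w ln P[Z = Z w]. *)
Definition ent (U : eqType) (Z : Omega -> U) : R :=
  - \sum_w p w * ln (prob (fun w' => Z w' == Z w)).

Definition pairRV (U V : eqType) (Y : Omega -> U) (Z : Omega -> V) :
  Omega -> U * V := fun w => (Y w, Z w).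

Definition cent (U V : eqType) (Y : Omega -> U) (Z : Omega -> V) : R :=
  ent (pairRV Y Z) - ent Z.

Definition jointRV (I : finType) (T : eqType) (X : I -> Omega -> T)
  (S : {set I}) : Omega -> seq T :=
  fun w => [seq X i w | i <- enum S].

End Info.

Section DAG.
Variable I : finType.
(* A directed graph over I given by its families: G y = parent set of y. *)
Definition edge (G : {ffun I -> {set I}}) : rel I := fun x y => x \in G y.

Definition dag_k (k : nat) (G : {ffun I -> {set I}}) : Prop :=
  (forall y, y \notin G y) /\ (forall y, #|G y| <= k)%N /\
  (forall x y, edge G x y -> ~~ connect (edge G) y x).

Definition adj (G : {ffun I -> {set I}}) (x y : I) : bool :=
  (x \in G y) || (y \in G x).

Definition vstruct (G : {ffun I -> {set I}}) (x z y : I) : bool :=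
  [&& x \in G z, y \in G z, x != y & ~~ adj G x y].

(* Markov equivalence (Verma--Pearl: same skeleton and same v-structures) *)
Definition markov_eq (G G' : {ffun I -> {set I}}) : Prop :=
  (forall x y, adj G x y = adj G' x y) /\
  (forall x z y, vstruct G x z y = vstruct G' x z y).
End DAG.

Definition score (R : realType) (Omega I : finType) (T : eqType)
  (p : Omega -> R) (X : I -> Omega -> T) (G : {ffun I -> {set I}}) : R :=
  - \sum_(y : I) cent p (X y) (jointRV X (G y)).

From HB Require Import structures.
From mathcomp Require Import all_boot all_order all_algebra.
From mathcomp Require Import all_classical all_reals all_analysis.
From mathcomp Require Import ring lra.
Set Implicit Arguments. Unset Strict Implicit.
Import Order.TTheory GRing.Theory Num.Theory.
Local Open Scope ring_scope.

(* Only hypothesis (V) and the fact that p is a probability mass function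
   matter.  Submodularity of entropy, H(A,B,Z) + H(B) <= H(A,B) + H(B,Z),
   yields H(A,Z) <= H(B,Z) + H(A|B), so exchanging X_a and X_b inside any joint
   entropy moves it by at most lambda.  H(X|Pi) is one such joint entropy minus
   H(Pi), and H(Y|Pi,X) is a difference of two of them, whence the bounds
   lambda and 2 lambda <= 3 lambda.  Submodularity is Gibbs' inequality for the
   Markov approximation P(a,b) P(b,z) / P(b) of P(a,b,z). *)

Lemma ln_le_subr1 (R : realType) (x : R) : 0 < x -> ln x <= x - 1.
Proof. by move=> x_gt0; have := expR_ge1Dx (ln x); rewrite lnK ?posrE //; lra. Qed.

Section Entropy.
Variables (R : realType) (Omega : finType) (p : Omega -> R).
Hypothesis p_ge0 : forall w, 0 <= p w.
Hypothesis p_sum1 : \sum_w p w = 1.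

Definition atom (U : eqType) (Z : Omega -> U) (w : Omega) : R :=
  prob p (fun u => Z u == Z w).

Lemma entE (U : eqType) (Z : Omega -> U) :
  ent p Z = - \sum_w p w * ln (atom Z w).
Proof. by []. Qed.

Lemma prob_ge0 (E : pred Omega) : 0 <= prob p E.
Proof. exact: sumr_ge0. Qed.

Lemma le_prob (E F : pred Omega) :
  (forall w, E w -> F w) -> prob p E <= prob p F.
Proof.
move=> EF; rewrite /prob !(big_mkcond _ p); apply: ler_sum => w _.
by case: (boolP (E w)) => [/EF -> //|_]; case: (F w).
Qed.

Lemma mass_le_prob (E : pred Omega) w : E w -> p w <= prob p E.
Proof.
move=> Ew; apply: le_trans (le_prob (E := pred1 w) _); last by move=> u /eqP ->.
by rewrite /prob big_pred1_eq.
Qed.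

Lemma atom_gt0 (U : eqType) (Z : Omega -> U) w : 0 < p w -> 0 < atom Z w.
Proof. by move=> pw_gt0; apply: lt_le_trans pw_gt0 _; apply: mass_le_prob. Qed.

Lemma prob_divff_le1 (E : pred Omega) : prob p E / prob p E <= 1.
Proof. by have [->|E_neq0] := eqVneq (prob p E) 0; rewrite ?mul0r ?divff. Qed.

Lemma le_ent (U V : eqType) (Z1 : Omega -> U) (Z2 : Omega -> V) :
  (forall w w', Z2 w' == Z2 w -> Z1 w' == Z1 w) -> ent p Z1 <= ent p Z2.
Proof.
move=> finer; rewrite !entE lerN2; apply: ler_sum => w _.
have := p_ge0 w; rewrite le_eqVlt => /predU1P[<-|pw_gt0]; first by rewrite !mul0r.
rewrite ler_wpM2l // ler_ln ?posrE ?atom_gt0 //.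
by apply: le_prob => u; apply: finer.
Qed.

Lemma eq_ent (U V : eqType) (Z1 : Omega -> U) (Z2 : Omega -> V) :
  (forall w w', (Z2 w' == Z2 w) = (Z1 w' == Z1 w)) -> ent p Z1 = ent p Z2.
Proof. by move=> same; apply/le_anti; rewrite !le_ent // => w w'; rewrite same. Qed.

Lemma gibbs_inequality (q : Omega -> R) :
  (forall w, 0 < p w -> 0 < q w) -> \sum_w p w * q w <= 1 ->
  \sum_w p w * ln (q w) <= 0.
Proof.
move=> q_gt0 sum_le1; apply: le_trans (_ : _ <= \sum_w p w * (q w - 1)) _.
  apply: ler_sum => w _.
  have := p_ge0 w; rewrite le_eqVlt => /predU1P[<-|pw_gt0]; first by rewrite !mul0r.
  by rewrite ler_wpM2l // ln_le_subr1 // q_gt0.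
under eq_bigr do rewrite mulrBr mulr1.
by rewrite sumrB p_sum1 subr_le0.
Qed.

Section Submodularity.
Variables (U V W : eqType) (A : Omega -> U) (B : Omega -> V) (Z : Omega -> W).
Let AB := pairRV A B.
Let BZ := pairRV B Z.
Let ABZ := pairRV AB Z.

Lemma sum_atom_ratio_le u v :
  \sum_(w | (AB u == AB w) && (BZ v == BZ w)) p w / (atom ABZ w * atom B w)
  <= if B v == B u then (atom B u)^-1 else 0.
Proof.
set E := fun w => (AB u == AB w) && (BZ v == BZ w).
have E_B w : E w -> B w = B u /\ B w = B v.
  by rewrite /E /AB /BZ /pairRV !xpair_eqE => /and3P[/andP[_ /eqP->] /eqP-> _].
case: eqP => [BvBu | BvBu]; last first.
  by rewrite big_pred0 // => w; apply/negP => /E_B[Bwu Bwv]; apply: BvBu; rewrite -Bwv.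
have atomE w : E w -> atom ABZ w = prob p E /\ atom B w = atom B u.
  move=> Ew; have [Bwu _] := E_B w Ew; split; last first.
    by apply: eq_bigl => w'; rewrite Bwu.
  move: Ew; rewrite /E /AB /BZ /ABZ /pairRV !xpair_eqE.
  move=> /andP[/andP[/eqP Awu _] /andP[_ /eqP Zwv]].
  apply: eq_bigl => w'; rewrite /= !xpair_eqE Awu Bwu Zwv -BvBu.
  rewrite (eq_sym (A w)) (eq_sym (B v)) (eq_sym (Z w)).
  by case: (B w' == B v); rewrite /= ?andbT ?andbF.
rewrite (eq_bigr (fun w => p w / prob p E / atom B u)); last first.
  by move=> w /atomE[-> ->]; rewrite invfM mulrA.
rewrite -!mulr_suml -[X in _ <= X]mul1r ler_wpM2r ?invr_ge0 ?prob_ge0 //.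
exact: prob_divff_le1.
Qed.

Lemma sum_markov_ratio_le1 :
  \sum_w p w * (atom AB w * atom BZ w / (atom ABZ w * atom B w)) <= 1.
Proof.
(* Expand P(A,B)(w) P(B,Z)(w) as a double sum over u, v: the sum over w then
   runs over the (A,B,Z)-atom of (A u, B u, Z v). *)
pose c w := p w / (atom ABZ w * atom B w).
have -> : \sum_w p w * (atom AB w * atom BZ w / (atom ABZ w * atom B w)) =
    \sum_u \sum_v p u * p v * \sum_(w | (AB u == AB w) && (BZ v == BZ w)) c w.
  transitivity (\sum_w \sum_u \sum_v
    p u * p v * (if (AB u == AB w) && (BZ v == BZ w) then c w else 0)).
    apply: eq_bigr => w _.
    rewrite (_ : p w * _ = atom AB w * atom BZ w * c w); last by rewrite /c; ring.
    rewrite /atom /prob !(big_mkcond (fun u => _ == _)) big_distrlr /= mulr_suml.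
    apply: eq_bigr => u _; rewrite mulr_suml; apply: eq_bigr => v _.
    by do 2!case: eqP => _; rewrite /= ?(mul0r, mulr0).
  rewrite exchange_big; apply: eq_bigr => u _; rewrite exchange_big.
  by apply: eq_bigr => v _; rewrite -mulr_sumr -big_mkcond.
apply: le_trans (_ : _ <= \sum_u \sum_v
    p u * p v * (if B v == B u then (atom B u)^-1 else 0)) _.
  apply: ler_sum => u _; apply: ler_sum => v _.
  by rewrite ler_wpM2l ?mulr_ge0 ?sum_atom_ratio_le.
rewrite -p_sum1; apply: ler_sum => u _.
rewrite (eq_bigr (fun v => p u / atom B u * (if B v == B u then p v else 0)));
  last by move=> v _; case: ifP; rewrite ?mulr0 // mulrAC.
rewrite -mulr_sumr -big_mkcond -mulrA -[X in _ <= X]mulr1 ler_wpM2l //.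
by rewrite mulrC; apply: prob_divff_le1.
Qed.

Lemma ent_submod : ent p ABZ + ent p B <= ent p AB + ent p BZ.
Proof.
pose q w := atom AB w * atom BZ w / (atom ABZ w * atom B w).
have q_gt0 w : 0 < p w -> 0 < q w.
  by move=> pw_gt0; rewrite divr_gt0 ?mulr_gt0 ?atom_gt0.
have ln_q w : p w * ln (q w) = p w * ln (atom AB w) + p w * ln (atom BZ w)
                             - p w * ln (atom ABZ w) - p w * ln (atom B w).
  have := p_ge0 w; rewrite le_eqVlt => /predU1P[<-|pw_gt0].
    by rewrite !mul0r !subr0 addr0.
  rewrite ln_div ?lnM ?posrE ?mulr_gt0 ?atom_gt0 //; ring.
have := gibbs_inequality q_gt0 sum_markov_ratio_le1.
rewrite (eq_bigr _ (fun w _ => ln_q w)) !sumrB big_split /= !entE; lra.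
Qed.

End Submodularity.

Lemma ent_pair_le_cent (U V W : eqType) (A : Omega -> U) (B : Omega -> V) (Z : Omega -> W) :
  ent p (pairRV A Z) <= ent p (pairRV B Z) + cent p A B.
Proof.
have AZ_le_ABZ : ent p (pairRV A Z) <= ent p (pairRV (pairRV A B) Z).
  by apply: le_ent => w w'; rewrite /pairRV !xpair_eqE => /andP[/andP[-> _] ->].
by have := ent_submod A B Z; rewrite /cent; lra.
Qed.

Lemma ent_pairC (U V : eqType) (A : Omega -> U) (B : Omega -> V) :
  ent p (pairRV A B) = ent p (pairRV B A).
Proof. by apply: eq_ent => w w'; rewrite /pairRV !xpair_eqE andbC. Qed.

Section Perturbation.
Variables (U V : eqType) (A : Omega -> U) (B : Omega -> V) (l : R).
Hypotheses (AB_le : cent p A B <= l) (BA_le : cent p B A <= l).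

Lemma dist_ent_pair_le (W : eqType) (Z : Omega -> W) :
  `|ent p (pairRV A Z) - ent p (pairRV B Z)| <= l.
Proof.
have := ent_pair_le_cent A B Z; have := ent_pair_le_cent B A Z.
move: AB_le BA_le; rewrite ler_norml => *; apply/andP; split; lra.
Qed.

Lemma dist_cent_le (W : eqType) (Z : Omega -> W) : `|cent p A Z - cent p B Z| <= l.
Proof. by rewrite /cent opprB addrA subrK dist_ent_pair_le. Qed.

Lemma dist_cent_pair_le (S W : eqType) (Y : Omega -> S) (Z : Omega -> W) :
  `|cent p Y (pairRV Z A) - cent p Y (pairRV Z B)| <= 2 * l.
Proof.
have centE (C : eqType) (c : Omega -> C) : cent p Y (pairRV Z c) =
    ent p (pairRV c (pairRV Y Z)) - ent p (pairRV c Z).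
  rewrite /cent (ent_pairC Z); congr (_ - _); apply: eq_ent => w w'.
  by rewrite /pairRV !xpair_eqE andbC andbA.
rewrite !centE.
have := dist_ent_pair_le (pairRV Y Z); have := dist_ent_pair_le Z.
set x := _ - ent p (pairRV B (pairRV Y Z)); set y := _ - ent p (pairRV B Z).
move=> y_le x_le; rewrite (_ : _ - _ = x - y); last by rewrite /x /y; ring.
by apply: le_trans (ler_normB _ _) _; lra.
Qed.

End Perturbation.
End Entropy.

Theorem lemma7 (R : realType) (k : nat) (Omega I : finType) (T : eqType)
  (p : Omega -> R) (X : I -> Omega -> T) (a : I) (Xb : Omega -> T)
  (alpha beta lambda : R) :
  (0 < k)%N ->
  (k <= #|I|)%N ->
  (* p is a probability mass function; D_2 is the joint law of (X_i)_{i in I}, Xb,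
     and D_1 its marginal on X_1 = (X_i)_{i in I} *)
  (forall w, 0 <= p w) -> \sum_w p w = 1 ->
  0 < alpha -> 0 < beta ->
  (* (I) unique optimal equivalence class with gap beta *)
  (exists Gs : {ffun I -> {set I}}, dag_k k Gs /\
     (forall G, dag_k k G -> ~ markov_eq G Gs ->
        score p X G <= score p X Gs - beta) /\
  (* (II) X_a has no children in any structure of the optimal EC *)
     (forall G, dag_k k G -> markov_eq G Gs -> forall y, a \notin G y)) ->
  (* (III) *)
  cent p (X a) (jointRV X [set~ a]) = alpha ->
  (* lambda in (0, min(alpha, beta/(3d))), d = |X_1| + 1 *)
  0 < lambda -> lambda < Num.min alpha (beta / (3 * (#|I|.+1)%:R)) ->
  (* (IV) hidden Bernoulli variable C *)
  (exists C : Omega -> bool,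
     (forall (c : bool) (x : I -> T),
        prob p (fun w => (C w == c) && [forall i, X i w == x i])
        = prob p (fun w => C w == c) * prob p (fun w => [forall i, X i w == x i])) /\
     prob p (fun w => C w && (Xb w != X a w)) = 0 /\
     (forall (y : T) (x : I -> T),
        prob p (fun w => ~~ C w && (Xb w == y) && [forall i, X i w == x i])
          * prob p (fun w => ~~ C w)
        = prob p (fun w => ~~ C w && (Xb w == y))
          * prob p (fun w => ~~ C w && [forall i, X i w == x i]))) ->
  (* (V) *)
  Num.max (cent p Xb (X a)) (cent p (X a) Xb) = lambda ->
  forall (Pi : {set I}) (Y : I),
    `|cent p Xb (jointRV X Pi) - cent p (X a) (jointRV X Pi)| <= lambda /\
    `|cent p (X Y) (pairRV (jointRV X Pi) Xb)
      - cent p (X Y) (pairRV (jointRV X Pi) (X a))| <= 3 * lambda.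
Proof.
move=> _ _ p_ge0 p_sum1 _ _ _ _ lambda_gt0 _ _ max_cent Pi Y.
have ba_le : cent p Xb (X a) <= lambda by rewrite -max_cent le_max lexx.
have ab_le : cent p (X a) Xb <= lambda by rewrite -max_cent le_max lexx orbT.
split; first exact: dist_cent_le.
apply: le_trans (dist_cent_pair_le p_ge0 p_sum1 ba_le ab_le _ _) _; lra.
Qed.
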